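(* Let $X$ be a real or complex Banach space, $(A(n))_{n\in\mathbb{N}}$ a sequence in $\mathcal{B}(X)$, and $P:\mathbb{N}\to\mathcal{B}(X)$ a family of projections compatible with the system $x_{n+1}=A(n)x_n$, with complementary family $Q(n)=I-P(n)$. Then the system is $P$-uniformly exponentially dichotomic if and only if there exist constants $D,d>0$ such that \[ \sum_{j=m}^{\infty}e^{d(j-m)}\|\mathcal{A}_P(j,n)x\|+\sum_{k=n}^{m}e^{d(m-k)}\|\mathcal{A}_Q(k,n)x\|\le D\big(\|\mathcal{A}_P(m,n)x\|+\|\mathcal{A}_Q(m,n)x\|\big) \] for all $(m,n)\in\Delta$ and all $x\in X$.
   Context: $\mathbb{N}$ denotes the set of positive integers; $\mathcal{B}(X)$ is the Banach algebra of bounded linear operators on $X$, and $I$ is the identity operator. $\Delta=\{(m,n)\in\mathbb{N}^2: m\ge n\}$. A family of projections is a map $P:\mathbb{N}\to\mathcal{B}(X)$ with $P(n)^2=P(n)$ for all $n$; its complementary family is $Q(n)=I-P(n)$. $P$ is compatible with the system $x_{n+1}=A(n)x_n$ if $A(n+1)P(n)=P(n+1)A(n+1)$ for all $n\in\mathbb{N}$. For $(m,n)\in\Delta$ define $\mathcal{A}_P(m,n)=A(m)\cdots A(n+1)P(n)$ if $m>n$ and $\mathcal{A}_P(n,n)=P(n)$; similarly $\mathcal{A}_Q(m,n)=A(m)\cdots A(n+1)Q(n)$ if $m>n$ and $\mathcal{A}_Q(n,n)=Q(n)$. The system is $P$-uniformly exponentially dichotomic if there exist constants $N\ge1$ and $\alpha>0$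 such that $e^{\alpha(m-n)}\big(\|\mathcal{A}_P(m,n)x\|+\|Q(n)x\|\big)\le N\big(\|P(n)x\|+\|\mathcal{A}_Q(m,n)x\|\big)$ for all $(m,n)\in\Delta$, $x\in X$. *)

From HB Require Import structures.
From mathcomp Require Import all_boot all_order all_algebra.
From mathcomp Require Import all_classical all_reals all_analysis.
Set Implicit Arguments. Unset Strict Implicit. Unset Printing Implicit Defensive.
Import Order.TTheory GRing.Theory Num.Theory.
Import numFieldNormedType.Exports.
Local Open Scope ring_scope.

Section Defs.
Context {R : realType} {X : normedModType R}.

(* evolution operator: evol A m n = A(m) o ... o A(n+1) for m > n, identity if m <= n *)
Fixpoint evol (A : nat -> X -> X) (m n : nat) : X -> X :=
  match m with
  | 0 => id
  | m'.+1 => if (n <= m')%N then (A m'.+1) \o (evol A m' n) else id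
  end.

Definition compl (P : nat -> X -> X) (n : nat) : X -> X := fun x => x - P n x.

Definition evolP (A P : nat -> X -> X) (m n : nat) : X -> X :=
  fun x => evol A m n (P n x).

Definition evolQ (A P : nat -> X -> X) (m n : nat) : X -> X :=
  fun x => evol A m n (compl P n x).

Definition compatible (A P : nat -> X -> X) : Prop :=
  forall n : nat, (1 <= n)%N -> forall x, A n.+1 (P n x) = P n.+1 (A n.+1 x).

Definition P_ued (A P : nat -> X -> X) : Prop :=
  exists (N alpha : R), 1 <= N /\ 0 < alpha /\
    forall m n : nat, (1 <= n)%N -> (n <= m)%N -> forall x : X,
      expR (alpha * (m - n)%:R) * (`|evolP A P m n x| + `|compl P n x|)
      <= N * (`|P n x| + `|evolQ A P m n x|).

End Defs.

From HB Require Import structures.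
From mathcomp Require Import all_boot all_order all_algebra.
From mathcomp Require Import all_classical all_reals all_analysis.
From mathcomp Require Import zify ring.
Import Order.TTheory GRing.Theory Num.Theory.
Import numFieldNormedType.Exports.
Local Open Scope ring_scope.

(* A dichotomy with constants (N, alpha) yields the pointwise estimates
   e^{alpha (j - m)} |A_P(j,n) x| <= N |A_P(m,n) x|  and
   e^{alpha (m - k)} |A_Q(k,n) x| <= N |A_Q(m,n) x|  (k <= m <= j);
   weighting by e^{(alpha/2)(.)} instead leaves a geometric factor e^{-alpha/2}
   per step, so both sums are bounded by N / (1 - e^{-alpha/2}) times the
   right-hand side.  Conversely, the sum inequality applied to P(n) x at (n, n)
   keeps only the term j = m of the series, and applied to Q(n) x at (m, n)
   keeps only the term k = n of the finite sum; these are the two halves of the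
   dichotomy with N = max(1, D) and alpha = d. *)

Section SumCondition.
Context {R : realType} {X : normedModType R}.

Definition expsum_dichotomic (A P : nat -> X -> X) (D d : R) : Prop :=
  forall m n : nat, (1 <= n)%N -> (n <= m)%N -> forall x : X,
    ((\sum_(m <= j <oo) (expR (d * (j - m)%:R) * `|evolP A P j n x|)%:E)
     + (\sum_(n <= k < m.+1) expR (d * (m - k)%:R) * `|evolQ A P k n x|)%:E
     <= (D * (`|evolP A P m n x| + `|evolQ A P m n x|))%:E)%E.

End SumCondition.

Section Evolution.
Context {R : realType} {X : normedModType R}.
Context {A : nat -> {linear X -> X}}.
Local Notation A' := (fun n => A n : X -> X).

Lemma evol_id m n x : (m <= n)%N -> evol A' m n x = x.
Proof. by case: m => //= m mn; rewrite leqNgt mn. Qed.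

Lemma evolS m n x : (n <= m)%N -> evol A' m.+1 n x = A m.+1 (evol A' m n x).
Proof. by move=> nm /=; rewrite nm. Qed.

Lemma evolB m n x y : evol A' m n (x - y) = evol A' m n x - evol A' m n y.
Proof. by elim: m => //= m IH; case: ifP => // _; rewrite /= IH linearB. Qed.

Lemma evol0 m n : evol A' m n 0 = 0.
Proof. by have := evolB m n 0 0; rewrite !subrr. Qed.

Lemma evol_comp m k n x : (n <= k)%N -> (k <= m)%N ->
  evol A' m k (evol A' k n x) = evol A' m n x.
Proof.
move=> nk; elim: m => [|m IH] km.
  by move: km; rewrite leqn0 => /eqP ->; rewrite evol_id.
move: km; rewrite leq_eqVlt => /orP[/eqP <-|]; first by rewrite evol_id.
by rewrite ltnS => km; rewrite !evolS ?IH //; apply: leq_trans km.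
Qed.

Context {P : nat -> {linear X -> X}}.
Local Notation P' := (fun n => P n : X -> X).

Lemma evol_compatible m n x : compatible A' P' -> (1 <= n)%N -> (n <= m)%N ->
  P m (evol A' m n x) = evol A' m n (P n x).
Proof.
move=> hcomp n1; elim: m => [|m IH] nm.
  by move: nm; rewrite leqn0 => /eqP ->; rewrite !evol_id.
move: nm; rewrite leq_eqVlt => /orP[/eqP <-|]; first by rewrite !evol_id.
by rewrite ltnS => nm; rewrite !evolS // -IH // hcomp // (leq_trans n1 nm).
Qed.

Hypothesis hPproj : forall n x, P n (P n x) = P n x.

Lemma P_compl n x : P n (compl P' n x) = 0.
Proof. by rewrite /compl linearB /= hPproj subrr. Qed.

Lemma compl_id n x : compl P' n (compl P' n x) = compl P' n x.
Proof. by rewrite {1}/compl P_compl subr0. Qed.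

Lemma evolP_P j n x : evolP A' P' j n (P n x) = evolP A' P' j n x.
Proof. by rewrite /evolP hPproj. Qed.

Lemma evolQ_P k n x : evolQ A' P' k n (P n x) = 0.
Proof. by rewrite /evolQ /compl hPproj subrr evol0. Qed.

Lemma evolP_compl j n x : evolP A' P' j n (compl P' n x) = 0.
Proof. by rewrite /evolP P_compl evol0. Qed.

Lemma evolQ_compl k n x : evolQ A' P' k n (compl P' n x) = evolQ A' P' k n x.
Proof. by rewrite /evolQ compl_id. Qed.

Section Dichotomy.
Hypothesis hcomp : compatible A' P'.
Context {N alpha : R}.
Hypothesis hdich : forall m n : nat, (1 <= n)%N -> (n <= m)%N -> forall x : X,
  expR (alpha * (m - n)%:R) * (`|evolP A' P' m n x| + `|compl P' n x|)
  <= N * (`|P n x| + `|evolQ A' P' m n x|).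

Lemma evolP_decay m n j x : (1 <= n)%N -> (n <= m)%N -> (m <= j)%N ->
  expR (alpha * (j - m)%:R) * `|evolP A' P' j n x| <= N * `|evolP A' P' m n x|.
Proof.
move=> n1 nm mj; have := hdich j m (leq_trans n1 nm) mj (evolP A' P' m n x).
set y := evolP A' P' m n x.
have Py : P m y = y by rewrite /y /evolP evol_compatible // hPproj.
have Qy : compl P' m y = 0 by rewrite /compl Py subrr.
rewrite Py Qy /evolQ Qy evol0 normr0 !addr0 /evolP Py.
by rewrite /y /evolP evol_comp.
Qed.

Lemma evolQ_growth m n k x : (1 <= n)%N -> (n <= k)%N -> (k <= m)%N ->
  expR (alpha * (m - k)%:R) * `|evolQ A' P' k n x| <= N * `|evolQ A' P' m n x|.
Proof.
move=> n1 nk km; have := hdich m k (leq_trans n1 nk) km (evolQ A' P' k n x).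
set y := evolQ A' P' k n x.
have Py : P k y = 0 by rewrite /y /evolQ evol_compatible // P_compl evol0.
have Qy : compl P' k y = y by rewrite /compl Py subr0.
rewrite Py Qy /evolP Py evol0 normr0 !add0r /evolQ Qy.
by rewrite /y /evolQ evol_comp.
Qed.

End Dichotomy.
End Evolution.

Section Geometric.
Context {R : realType}.

Lemma geometric_sum_le (q : R) k : 0 < q -> q < 1 ->
  \sum_(i < k) q ^+ i <= (1 - q)^-1.
Proof.
move=> q0 q1; have := @geometric_le_lim R k 1 q ler01 q0.
rewrite gtr0_norm // => /(_ q1); rewrite seriesEord div1r /=.
by under eq_bigr do rewrite mul1r.
Qed.

Lemma geometric_rev_sum_le (q : R) n m : 0 < q -> q < 1 ->
  \sum_(n <= k < m.+1) q ^+ (m - k) <= (1 - q)^-1.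
Proof.
move=> q0 q1; case: (leqP n m.+1) => nm; last first.
  by rewrite big_geq 1?ltnW // invr_ge0 subr_ge0 ltW.
rewrite big_nat_rev -{1}(add0n n) big_addn big_mkord.
rewrite (eq_bigr (fun i : 'I_(m.+1 - n) => q ^+ i)); first exact: geometric_sum_le.
by move=> i _; congr (_ ^+ _); have := ltn_ord i; lia.
Qed.

Lemma expR_halve_le (a v c : R) (i : nat) : expR (a * i%:R) * v <= c ->
  expR (a / 2 * i%:R) * v <= c * expR (- (a / 2)) ^+ i.
Proof.
move=> h; rewrite -expRM_natl.
have -> : expR (a / 2 * i%:R) * v = expR (i%:R * - (a / 2)) * (expR (a * i%:R) * v).
  by rewrite mulrA -expRD; congr (expR _ * _); field.
by rewrite mulrC ler_wpM2r // expR_ge0.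
Qed.

Lemma nneseries_term_le (u : nat -> R) m j : (forall i, 0 <= u i) -> (m <= j)%N ->
  ((u j)%:E <= \sum_(m <= i <oo) (u i)%:E)%E.
Proof.
move=> u0 mj; apply: le_trans (nneseries_lim_ge j.+1 _); last first.
  by move=> *; rewrite lee_fin.
by rewrite big_nat_recr //= sumEFin -EFinD lee_fin lerDr sumr_ge0.
Qed.

Lemma nneseries_geometric_le (t : nat -> R) m (K q : R) : (forall j, 0 <= t j) ->
  0 <= K -> 0 < q -> q < 1 ->
  (forall j, (m <= j)%N -> t j <= K * q ^+ (j - m)) ->
  (\sum_(m <= j <oo) (t j)%:E <= (K * (1 - q)^-1)%:E)%E.
Proof.
move=> t0 K0 q0 q1 ht.
apply: lime_le; first by apply: is_cvg_nneseries => *; rewrite lee_fin.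
apply: nearW => k; rewrite sumEFin lee_fin.
case: (leqP k m) => km.
  by rewrite big_geq // mulr_ge0 // invr_ge0 subr_ge0 ltW.
apply: le_trans (ler_sum_nat (G := fun j => K * q ^+ (j - m)) _) _.
  by move=> i /andP[mi _]; apply: ht.
rewrite -mulr_sumr ler_wpM2l // -{1}(add0n m) big_addn big_mkord.
under eq_bigr do rewrite addnK.
exact: geometric_sum_le.
Qed.

End Geometric.

Section Equivalence.
Context {R : realType} {X : normedModType R}.
Variables A P : nat -> {linear X -> X}.
Local Notation A' := (fun n => A n : X -> X).
Local Notation P' := (fun n => P n : X -> X).
Hypothesis hPproj : forall n x, P n (P n x) = P n x.

Lemma P_ued_expsum : compatible A' P' -> P_ued A' P' ->
  exists D d : R, 0 < D /\ 0 < d /\ expsum_dichotomic A' P' D d.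
Proof.
move=> hcomp [N [alpha [N1 [alpha0 hdich]]]].
set q := expR (- (alpha / 2)).
have N0 : 0 < N by apply: lt_le_trans N1.
have q0 : 0 < q by apply: expR_gt0.
have q1 : q < 1 by rewrite expR_lt1 oppr_lt0 divr_gt0.
exists (N * (1 - q)^-1), (alpha / 2); split.
  by rewrite mulr_gt0 // invr_gt0 subr_gt0.
split; first by rewrite divr_gt0.
move=> m n n1 nm x; rewrite mulrDr EFinD; apply: leeD.
- rewrite mulrAC; apply: nneseries_geometric_le => // [|j mj].
    by rewrite mulr_ge0 // ltW.
  by apply: expR_halve_le; apply: (evolP_decay hPproj hcomp hdich).
- rewrite lee_fin; apply: le_trans (ler_sum_nat
    (G := fun k => N * `|evolQ A' P' m n x| * q ^+ (m - k)) _) _.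
    move=> k /andP[nk km]; apply: expR_halve_le.
    exact: (evolQ_growth hPproj hcomp hdich).
  rewrite -mulr_sumr mulrAC ler_wpM2r // ler_wpM2l ?(ltW N0) //.
  exact: geometric_rev_sum_le.
Qed.

Section FromSums.
Context {D d : R}.
Hypothesis hsum : expsum_dichotomic A' P' D d.

Lemma expsum_evolP_le m n x : (1 <= n)%N -> (n <= m)%N ->
  expR (d * (m - n)%:R) * `|evolP A' P' m n x| <= D * `|P n x|.
Proof.
move=> n1 nm; have := hsum n n n1 (leqnn n) (P n x).
have evolP_nn : evolP A' P' n n x = P n x by rewrite /evolP evol_id.
under eq_eseriesr do rewrite evolP_P //.
rewrite evolP_P // evolQ_P // evolP_nn normr0 addr0.
set T := (X in (_ + X%:E)%E) => h.
have T0 : (0 <= T%:E)%E.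
  by rewrite lee_fin sumr_ge0 // => k _; rewrite mulr_ge0 // expR_ge0.
rewrite -lee_fin; apply: le_trans _ (le_trans (leeDl _ T0) h).
by apply: nneseries_term_le => // i; rewrite mulr_ge0 // expR_ge0.
Qed.

Lemma expsum_compl_le m n x : (1 <= n)%N -> (n <= m)%N ->
  expR (d * (m - n)%:R) * `|compl P' n x| <= D * `|evolQ A' P' m n x|.
Proof.
move=> n1 nm; have := hsum m n n1 nm (compl P' n x).
have evolQ_nn : evolQ A' P' n n x = compl P' n x by rewrite /evolQ evol_id.
rewrite evolP_compl // evolQ_compl // normr0 add0r.
set S := (X in (X + _)%E) => h.
have S0 : (0 <= S)%E.
  by apply: nneseries_ge0 => *; rewrite lee_fin mulr_ge0 // expR_ge0.
rewrite -lee_fin; apply: le_trans _ (le_trans (leeDr _ S0) h).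
rewrite lee_fin big_ltn ?ltnS // evolQ_compl // evolQ_nn lerDl.
by rewrite sumr_ge0 // => k _; rewrite mulr_ge0 // expR_ge0.
Qed.

End FromSums.

Lemma expsum_P_ued :
  (exists D d : R, 0 < D /\ 0 < d /\ expsum_dichotomic A' P' D d) -> P_ued A' P'.
Proof.
case=> D [d [_ [d0 hsum]]].
exists (Num.max 1 D), d; split; first by rewrite le_max lexx.
split => // m n n1 nm x; rewrite mulrDr.
have hP := expsum_evolP_le hsum m n x n1 nm.
have hQ := expsum_compl_le hsum m n x n1 nm.
apply: le_trans (lerD hP hQ) _.
by rewrite -mulrDr ler_wpM2r ?addr_ge0 // le_max lexx orbT.
Qed.

End Equivalence.

Theorem mainTheorem2 (R : realType) (X : completeNormedModType R)
  (A P : nat -> {linear X -> X})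
  (hAc : forall n, continuous (A n))
  (hPc : forall n, continuous (P n))
  (hPproj : forall n x, P n (P n x) = P n x)
  (hcomp : compatible (fun n => A n : X -> X) (fun n => P n : X -> X)) :
  P_ued (fun n => A n : X -> X) (fun n => P n : X -> X) <->
  exists (D d : R), 0 < D /\ 0 < d /\
    forall m n : nat, (1 <= n)%N -> (n <= m)%N -> forall x : X,
      ((\sum_(m <= j <oo)
          (expR (d * (j - m)%:R) * `|evolP (fun k => A k : X -> X) (fun k => P k : X -> X) j n x|)%:E)
       + (\sum_(n <= k < m.+1)
          expR (d * (m - k)%:R) * `|evolQ (fun k => A k : X -> X) (fun k => P k : X -> X) k n x|)%:E
       <= (D * (`|evolP (fun k => A k : X -> X) (fun k => P k : X -> X) m n x|
               + `|evolQ (fun k => A k : X -> X) (fun k => P k : X -> X) m n x|))%:E)%E.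
Proof.
split; first exact: P_ued_expsum.
exact: expsum_P_ued.
Qed.
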